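(* Let $n\ge 2$ and let $i,j$ be integers with $1\le i\le n-1$ and $0\le j\le n-1$. For every graph $G^*$ on $n$ vertices with at most one loop per vertex, with adjacency eigenvalues $\lambda_1\ge\lambda_2\ge\cdots\ge\lambda_n$, \[\lambda_{i+1}(G^* )-\lambda_{n-j}(G^* )\le \frac{n}{2}\sqrt{\frac{i+j+1}{i(j+1)}}.\] Consequently, $s_{i,j}\le \frac12\sqrt{\frac{i+j+1}{i(j+1)}}$.
   Context: A graph with at most one loop per vertex on vertex set $\{1,\dots,n\}$ is identified with its adjacency matrix $A=(a_{uv})$, a symmetric $n\times n$ $(0,1)$-matrix where $a_{uv}=1$ iff $uv$ is an edge and $a_{uu}=1$ iff there is a loop at $u$. Its eigenvalues (of $A$) are listed as $\lambda_1\ge\cdots\ge\lambda_n$. For a simple graph $G$ on $n$ vertices, ${\rm spread}_{i,j}(G)=\lambda_{i+1}(G)-\lambda_{n-j}(G)$; ${\rm spread}_{i,j}(n)$ is the maximum of ${\rm spread}_{i,j}(G)$ over all simple graphs $G$ on $n$ vertices, and $s_{i,j}=\lim_{n\to\infty}{\rm spread}_{i,j}(n)/n$ (this limit is known to exist). *)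

From HB Require Import structures.
From mathcomp Require Import all_boot all_order all_algebra.
From mathcomp Require Import all_classical all_reals all_analysis.
Set Implicit Arguments. Unset Strict Implicit. Unset Printing Implicit Defensive.
Import Order.TTheory GRing.Theory Num.Theory.
Import numFieldNormedType.Exports.
Local Open Scope ring_scope.

(* A graph on vertex set 'I_n (= {1,...,n} shifted to {0,...,n-1}) with at
   most one loop per vertex is given by a symmetric boolean adjacency matrix
   e (e u u = true iff there is a loop at u). *)
Definition loop_graph n (e : 'M[bool]_n) : bool := e^T == e.

Definition simple_graph n (e : 'M[bool]_n) : bool :=
  (e^T == e) && [forall u, ~~ e u u].

Definition adj (R : nzRingType) n (e : 'M[bool]_n) : 'M[R]_n :=
  map_mx (fun b : bool => (b%:R : R)) e.

Definition is_eigseq (R : realType) n (A : 'M[R]_n) (s : seq R) : Prop :=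
  sorted (fun x y : R => y <= x) s /\
  char_poly A = \prod_(x <- s) ('X - x%:P).

(* The (chosen) nonincreasing list of eigenvalues of A; [::] if A has
   non-real eigenvalues (never the case for symmetric A). The list is unique
   when it exists, so the choice is irrelevant. *)
Definition eigs (R : realType) n (A : 'M[R]_n) : seq R :=
  match pselect (exists s, is_eigseq A s) with
  | left h => projT1 (cid h)
  | right _ => [::]
  end.

(* lambda_k(A), 1-indexed: lambda_1 >= ... >= lambda_n. *)
Definition lambda (R : realType) n (A : 'M[R]_n) (k : nat) : R :=
  nth 0 (eigs A) k.-1.

Definition spread (R : realType) (i j : nat) n (e : 'M[bool]_n) : R :=
  lambda (adj R e) i.+1 - lambda (adj R e) (n - j).

(* spread_{i,j}(n) = max over simple graphs on n vertices; the fold is started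
   at the value for the empty (simple) graph, so it is the true maximum. *)
Definition spread_n (R : realType) (i j n : nat) : R :=
  \big[Num.max/spread R i j (const_mx false : 'M[bool]_n)]_(e : 'M[bool]_n | simple_graph e)
     spread R i j e.

From HB Require Import structures.
From mathcomp Require Import all_boot all_order all_algebra.
From mathcomp Require Import all_classical all_reals all_analysis.
From mathcomp Require Import complex ring lra zify.
Import Order.TTheory GRing.Theory Num.Theory.
Import numFieldNormedType.Exports.
Local Open Scope ring_scope.
Set Implicit Arguments. Unset Strict Implicit. Unset Printing Implicit Defensive.

(* Let A be the adjacency matrix and J the all-ones matrix. Every entry of
   2A - J is +1 or -1, so its squared Frobenius norm is n^2. In an orthonormal
   eigenbasis of A this matrix becomes 2 diag(lambda) - v v^*, where v is the
   all-ones vector in that basis; with x_k = |v_k|^2 >= 0 this gives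
     n^2 = sum_k (2 lambda_k - x_k)^2 + sum_(k <> l) x_k x_l.
   On the block of the i+1 largest eigenvalues the terms add up to at least
   4 i lambda_(i+1)^2 (if lambda_(i+1) > 0), and the diagonal terms of the j+1
   smallest eigenvalues to at least 4 (j+1) lambda_(n-j)^2 (if
   lambda_(n-j) < 0). Cauchy-Schwarz turns these two bounds into the bound on
   lambda_(i+1) - lambda_(n-j); the bound on s_(i,j) follows by dividing by n
   and passing to the limit. *)

Lemma char_poly_conj (F : comNzRingType) n (Q P D : 'M[F]_n) :
  Q *m P = 1%:M -> char_poly (Q *m D *m P) = char_poly D.
Proof.
move=> QP; rewrite /char_poly /char_poly_mx !map_mxM.
set Q' := map_mx polyC Q; set P' := map_mx polyC P.
have QP' : Q' *m P' = 1%:M by rewrite -map_mxM QP map_mx1.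
have XE : ('X%:M : 'M[{poly F}]_n) = Q' *m 'X%:M *m P'.
  by rewrite mul_mx_scalar -scalemxAl QP' scalemx1.
by rewrite [in LHS]XE -mulmxBl -mulmxBr !det_mulmx mulrAC -det_mulmx QP' det1 mul1r.
Qed.

Section UnitaryConjugation.
Local Open Scope sesquilinear_scope.
Variable F : numClosedFieldType.

Lemma trmxC_mul m n p (A : 'M[F]_(m, n)) (B : 'M[F]_(n, p)) :
  (A *m B)^t* = B^t* *m A^t*.
Proof. by rewrite trmx_mul map_mxM. Qed.

Lemma mxtrace_mul_trmxC m n (X : 'M[F]_(m, n)) :
  \tr (X *m X^t*) = \sum_k \sum_l `|X k l| ^+ 2.
Proof.
apply: eq_bigr => k _; rewrite mxE; apply: eq_bigr => l _.
by rewrite !mxE normCK.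
Qed.

Lemma mxtrace_unitary_conj n (P M : 'M[F]_n) : P \is unitarymx ->
  \tr ((P *m M *m P^t*) *m (P *m M *m P^t*)^t*) = \tr (M *m M^t*).
Proof.
move=> /unitarymxP PPs; have PsP : P^t* *m P = 1%:M by apply: mulmx1C.
rewrite !trmxC_mul trmxCK !mulmxA -[P *m M *m P^t* *m P]mulmxA PsP mulmx1.
by rewrite -!mulmxA mxtrace_mulC !mulmxA -[_ *m P^t* *m P]mulmxA PsP mulmx1.
Qed.

Lemma mxtrace_diag_rank_one n (P : 'M[F]_n) (D : 'rV[F]_n) (u : 'cV[F]_n) :
  P \is unitarymx ->
  let M := 2%:R *: (P^t* *m diag_mx D *m P) - u *m u^t* in
  \tr (M *m M^t*) =
  \sum_k \sum_l `|(2%:R *: diag_mx D - (P *m u) *m (P *m u)^t*) k l| ^+ 2.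
Proof.
move=> Pu M; have /unitarymxP PPs := Pu.
rewrite -mxtrace_mul_trmxC -(mxtrace_unitary_conj M Pu); congr (\tr (_ *m _^t*)).
all: rewrite /M mulmxBr mulmxBl -!scalemxAr -scalemxAl !mulmxA PPs mul1mx.
all: by rewrite -[diag_mx D *m P *m _]mulmxA PPs mulmx1 trmxC_mul !mulmxA.
Qed.

End UnitaryConjugation.

(* The square of the modulus of entry (k, l) of [2 diag(d) - v v^*], where [x k = |v k|^2]. *)
Definition frob_sq_entry (R : nzRingType) n (d x : 'I_n -> R) (k l : 'I_n) : R :=
  if k == l then (2 * d k - x k) ^+ 2 else x k * x l.

Section RealSymmetric.
Local Open Scope sesquilinear_scope.
Variable R : rcfType.
Local Notation C := R[i].
Local Notation "r %:C" := (real_complex R r).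

Lemma real_sym_hermitian n (A : 'M[R]_n) : A^T = A ->
  map_mx (real_complex R) A \is hermsymmx.
Proof.
move=> symA; apply/is_hermitianmxP; rewrite expr0 scale1r.
apply/matrixP=> k l; rewrite !mxE conj_Creal; last by apply/complex_realP; exists (A l k).
by rewrite -[A in RHS]symA mxE.
Qed.

Lemma real_sym_unitary_diag n (A : 'M[R]_n) : A^T = A ->
  exists2 P : 'M[C]_n, P \is unitarymx &
    exists d : 'I_n -> R, map_mx (real_complex R) A = P^t* *m diag_mx (\row_k (d k)%:C) *m P.
Proof.
move=> /real_sym_hermitian hermA; set Ac := map_mx _ A in hermA *.
have Pu := spectral_unitarymx Ac; exists (spectralmx Ac) => //.
have /mxOverP Dreal := hermitian_spectral_diag_real hermA.
exists (fun k => complex.Re (spectral_diag Ac 0 k)).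
have -> : \row_k (complex.Re (spectral_diag Ac 0 k))%:C = spectral_diag Ac.
  by apply/rowP => k; rewrite mxE RRe_real // [k in RHS]ord1.
rewrite -invmx_unitary //; apply/orthomx_spectralP; exact: hermitian_normalmx.
Qed.

Lemma sym01_spectral_frobenius n (A : 'M[R]_n) :
  A^T = A -> (forall k l, A k l = 0 \/ A k l = 1) ->
  exists d x : 'I_n -> R, [/\ forall k, 0 <= x k,
    char_poly A = \prod_(k < n) ('X - (d k)%:P) &
    n%:R ^+ 2 = \sum_k \sum_l frob_sq_entry d x k l].
Proof.
move=> symA A01; have [P Pu [d AE]] := real_sym_unitary_diag symA.
pose v := P *m (const_mx 1 : 'cV[C]_n).
pose x k := complex.Re (`|v k 0| ^+ 2).
have xE k : (x k)%:C = `|v k 0| ^+ 2 by rewrite RRe_real // realX // normr_real.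
exists d, x; split.
- by move=> k; rewrite -ler0c xE exprn_ge0.
- apply: (@map_poly_inj _ _ (real_complex R)).
  have PsP : P^t* *m P = 1%:M by apply/mulmx1C/unitarymxP.
  rewrite map_char_poly AE char_poly_conj // char_poly_trig ?diag_mx_is_trig //.
  rewrite rmorph_prod; apply: eq_bigr => k _.
  by rewrite rmorphB /= map_polyX map_polyC !mxE eqxx mulr1n.
have J1 : (const_mx 1 : 'M[C]_n) = const_mx 1 *m (const_mx 1 : 'cV[C]_n)^t*.
  by apply/matrixP=> k l; rewrite !mxE big_ord1 !mxE conjC1 mulr1.
have := mxtrace_diag_rank_one (\row_k (d k)%:C) (const_mx 1) Pu.
rewrite /= -AE -J1 mxtrace_mul_trmxC => frobE.
apply: complexI; rewrite rmorphXn rmorph_nat rmorph_sum.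
have -> : (n%:R ^+ 2 : C) = \sum_(k < n) \sum_(l < n) 1.
  by rewrite !sumr_const !card_ord -mulrnA natrM expr2.
transitivity (\sum_k \sum_l `|(2%:R *: map_mx (real_complex R) A - const_mx 1) k l| ^+ 2).
  apply: eq_bigr => k _; apply: eq_bigr => l _; rewrite !mxE.
  case: (A01 k l) => ->; rewrite ?rmorph0 ?rmorph1 ?mulr0 ?sub0r ?normrN.
    by rewrite normr1 expr1n.
  by rewrite mulr1 mulr2n addrK normr1 expr1n.
rewrite frobE -/v; clearbody v; apply: eq_bigr => k _; rewrite rmorph_sum; apply: eq_bigr => l _.
rewrite !mxE big_ord1 !mxE /frob_sq_entry; case: eqP => [<-|_].
  rewrite mulr1n -normCK -xE -(rmorph_nat (real_complex R)) -rmorphM -rmorphB.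
  by rewrite real_normK ?rmorphXn //; apply/complex_realP; eexists.
by rewrite mulr0n mulr0 sub0r normrN normrM norm_conjC exprMn -!xE rmorphM.
Qed.

End RealSymmetric.

Lemma ler_sum_sub (R : numDomainType) (I : finType) (P Q : pred I) (F : I -> R) :
  (forall i, 0 <= F i) -> subpred P Q -> \sum_(i | P i) F i <= \sum_(i | Q i) F i.
Proof.
move=> F_ge0 PQ; rewrite [X in _ <= X](bigID P) /=.
rewrite (eq_bigl P) => [|i]; last by case: (boolP (P i)) => [/PQ ->|_]; rewrite ?andbF.
by rewrite lerDl sumr_ge0.
Qed.

Section FrobeniusLowerBound.
Variables (R : realFieldType) (n : nat) (d x : 'I_n -> R).
Hypothesis x_ge0 : forall k, 0 <= x k.
Local Notation T := (frob_sq_entry d x).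

Lemma frob_sq_entry_ge0 k l : 0 <= T k l.
Proof. by rewrite /frob_sq_entry; case: eqP => _; rewrite ?sqr_ge0 ?mulr_ge0. Qed.

Lemma frob_row_sum_ge0 k : 0 <= \sum_l T k l.
Proof. by apply: sumr_ge0 => l _; exact: frob_sq_entry_ge0. Qed.

Lemma frob_row_sum (K : {set 'I_n}) k : k \in K ->
  \sum_(l in K) T k l = 4 * d k ^+ 2 - 4 * (d k * x k) + x k * \sum_(l in K) x l.
Proof.
move=> Kk; rewrite !(big_setD1 k Kk) /= /frob_sq_entry eqxx.
rewrite (eq_bigr (fun l => x k * x l)) -?mulr_sumr; first by ring.
by move=> l; rewrite !inE => /andP[/negPf lk _]; rewrite eq_sym lk.
Qed.

(* With [k0] maximizing [d] on [K], the cross terms are absorbed by the square [(2 d k0 - S)^2]. *)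
Lemma frob_top_block (K : {set 'I_n}) (a : R) : {in K, forall k, a <= d k} ->
  4 * ((#|K|.-1)%:R * Num.max a 0 ^+ 2) <= \sum_(k in K) \sum_(l in K) T k l.
Proof.
move=> Ka; have [->|[k1 Kk1]] := set_0Vmem K.
  by rewrite cards0 mul0r mulr0 big_set0.
have [k0 Kk0 dk0_max] := arg_maxP d Kk1; have {}Kk0 : k0 \in K := Kk0.
set S := \sum_(l in K) x l.
rewrite (eq_bigr _ (fun k Kk => frob_row_sum Kk)) big_split /= sumrB -!mulr_sumr -mulr_suml -/S.
have cross_le : \sum_(k in K) d k * x k <= d k0 * S.
  by rewrite mulr_sumr; apply: ler_sum => k Kk; apply: ler_wpM2r => //; apply: dk0_max.
have rest_ge : (#|K :\ k0|%:R * Num.max a 0 ^+ 2) <= \sum_(k in K :\ k0) d k ^+ 2.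
  rewrite mulr_natl -sumr_const; apply: ler_sum => k; rewrite !inE => /andP[_ Kk].
  by have := Ka k Kk; case: (leP a 0) => [_ _|a_gt0 ak]; [rewrite expr0n sqr_ge0 | nra].
rewrite (cardsD1 k0 K) Kk0 (big_setD1 k0 Kk0) /=.
have := sqr_ge0 (2 * d k0 - S); nra.
Qed.

Lemma frob_block_bound (K L : {set 'I_n}) (a b : R) : [disjoint K & L] ->
  {in K, forall k, a <= d k} -> {in L, forall k, d k <= - b} ->
  4 * ((#|K|.-1)%:R * Num.max a 0 ^+ 2 + #|L|%:R * Num.max b 0 ^+ 2)
    <= \sum_k \sum_l T k l.
Proof.
move=> KL Ka Lb.
have diag_ge : 4 * (#|L|%:R * Num.max b 0 ^+ 2) <= \sum_(k in L) T k k.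
  rewrite mulrCA mulr_natl -sumr_const; apply: ler_sum => k Lk.
  rewrite /frob_sq_entry eqxx; have := Lb k Lk; have := x_ge0 k.
  by case: (leP b 0) => [_ _ _|b_gt0 xk dk]; [rewrite expr0n mulr0 sqr_ge0 | nra].
have split_le : \sum_(k in K) \sum_(l in K) T k l + \sum_(k in L) T k k
           <= \sum_k \sum_l T k l.
  rewrite [X in _ <= X](bigID (mem K)) /=; apply: lerD.
    apply: ler_sum => k _; apply: ler_sum_sub => [l|//]; exact: frob_sq_entry_ge0.
  apply: (@le_trans _ _ (\sum_(k in L) \sum_l T k l)).
    apply: ler_sum => k _; rewrite (bigD1 k) //= lerDl.
    by apply: sumr_ge0 => l _; exact: frob_sq_entry_ge0.
  apply: ler_sum_sub => [k|k Lk]; first exact: frob_row_sum_ge0.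
  by rewrite (disjointFl KL Lk).
by have := frob_top_block Ka; rewrite mulrDr; lra.
Qed.

End FrobeniusLowerBound.

Lemma le_half_sqrt_of_weighted_sqr (R : rcfType) (a b N p q : R) :
  0 < p -> 0 < q -> 0 <= N ->
  4 * (p * Num.max a 0 ^+ 2 + q * Num.max b 0 ^+ 2) <= N ^+ 2 ->
  a + b <= N / 2 * Num.sqrt ((p + q) / (p * q)).
Proof.
move=> p_gt0 q_gt0 N_ge0; set a' := Num.max a 0; set b' := Num.max b 0 => hN.
have [aa' a'_ge0] : a <= a' /\ 0 <= a' by rewrite !le_max !lexx orbT.
have [bb' b'_ge0] : b <= b' /\ 0 <= b' by rewrite !le_max !lexx orbT.
have pq_gt0 : 0 < p * q by rewrite mulr_gt0.
set Y := N / 2 * _.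
have Y_ge0 : 0 <= Y by rewrite mulr_ge0 ?sqrtr_ge0 ?divr_ge0.
have Y2 : Y ^+ 2 * (p * q) = (p + q) * N ^+ 2 / 4.
  rewrite exprMn sqr_sqrtr ?divr_ge0 ?addr_ge0 ?ltW //; field.
  by apply/andP; split; rewrite gt_eqF.
have cauchy_schwarz : (a' + b') ^+ 2 * (p * q) <= (p + q) * (p * a' ^+ 2 + q * b' ^+ 2).
  by have := sqr_ge0 (p * a' - q * b'); nra.
have : (a' + b') ^+ 2 <= Y ^+ 2.
  by rewrite -(ler_pM2r pq_gt0) Y2; nra.
rewrite ler_sqr ?nnegrE ?addr_ge0 //; lra.
Qed.

Section SortedCount.
Variables (disp : Order.disp_t) (T : porderType disp) (x0 : T) (s : seq T).
Hypothesis s_sorted : sorted (fun x y => (y <= x)%O) s.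

Let ge_trans : transitive (fun x y : T => (y <= x)%O).
Proof. by move=> y x z xy yz; apply: le_trans yz xy. Qed.

Lemma sorted_count_ge_nth k : (k < size s)%N ->
  (k.+1 <= count (fun y => nth x0 s k <= y)%O s)%N.
Proof.
move=> k_lt; rewrite -[s in count _ s](cat_take_drop k.+1 s) count_cat.
suff: all (fun y => nth x0 s k <= y)%O (take k.+1 s).
  by rewrite all_count => /eqP ->; rewrite size_takel ?leq_addr.
apply/(all_nthP x0) => l; rewrite size_takel // => l_lt; rewrite nth_take //.
by apply: (sorted_leq_nth ge_trans lexx) => //; rewrite inE (leq_trans l_lt).
Qed.

Lemma sorted_count_le_nth k : (k < size s)%N ->
  (size s - k <= count (fun y => y <= nth x0 s k)%O s)%N.
Proof.
move=> k_lt; rewrite -[s in count _ s](cat_take_drop k s) count_cat.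
suff: all (fun y => y <= nth x0 s k)%O (drop k s).
  by rewrite all_count => /eqP ->; rewrite size_drop leq_addl.
apply/(all_nthP x0) => l; rewrite size_drop => l_lt; rewrite nth_drop.
have kl_lt : (k + l < size s)%N by lia.
by apply: (sorted_leq_nth ge_trans lexx) => //; rewrite leq_addr.
Qed.

End SortedCount.

Lemma card_set_perm (T : finType) (U : eqType) (f : T -> U) (P : pred U) (s : seq U) :
  perm_eq s [seq f k | k <- enum T] -> #|[set k | P (f k)]| = count P s.
Proof.
move=> /permP ->; rewrite count_map cardE /enum_mem size_filter count_filter.
by apply: eq_count => k; rewrite !inE /= andbT.
Qed.

Lemma eigs_spec (R : realType) n (A : 'M[R]_n) (t : seq R) :
  char_poly A = \prod_(y <- t) ('X - y%:P) ->
  sorted (fun x y => y <= x) (eigs A) /\ perm_eq (eigs A) t.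
Proof.
move=> charA; rewrite /eigs; case: pselect => [h|[]]; last first.
  exists (sort (fun x y => y <= x) t); split.
    by apply: sort_sorted => x y; exact: le_total.
  by rewrite charA; apply: perm_big; rewrite perm_sym perm_sort.
case: (cid h) => s [s_sorted charA'] /=; split => //.
by apply: prod_XsubC_eq; rewrite -charA -charA'.
Qed.

Lemma adj_loop_graph_sym (R : nzRingType) n (e : 'M[bool]_n) :
  loop_graph e -> (adj R e)^T = adj R e.
Proof.
by move=> /eqP /matrixP eT; apply/matrixP => k l; rewrite !mxE -eT mxE.
Qed.

Lemma adj_01 (R : nzRingType) n (e : 'M[bool]_n) k l :
  adj R e k l = 0 \/ adj R e k l = 1.
Proof. by rewrite mxE; case: (e k l); [right | left]. Qed.

Lemma lambda_gap_le (R : realType) (n i j : nat) (e : 'M[bool]_n) :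
  (1 <= i < n)%N -> (j < n)%N -> loop_graph e ->
  lambda (adj R e) i.+1 - lambda (adj R e) (n - j)
    <= n%:R / 2 * Num.sqrt ((i + j + 1)%:R / (i * (j + 1))%:R).
Proof.
move=> /andP[i_ge1 i_lt] j_lt /(@adj_loop_graph_sym R) symA.
have [d [x [x_ge0 charA frobA]]] := sym01_spectral_frobenius symA (adj_01 R e).
have [s_sorted s_perm] : sorted (fun x y => y <= x) (eigs (adj R e)) /\
    perm_eq (eigs (adj R e)) [seq d k | k <- enum 'I_n].
  by apply: eigs_spec; rewrite charA big_map big_enum.
rewrite /lambda; set s := eigs _ in s_sorted s_perm *.
have size_s : size s = n by rewrite (perm_size s_perm) size_map size_enum_ord.
set a := nth 0 s i.+1.-1; set c := nth 0 s (n - j).-1.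
have RHS_ge0 : 0 <= n%:R / 2 * Num.sqrt ((i + j + 1)%:R / (i * (j + 1))%:R) :> R.
  by rewrite mulr_ge0 ?sqrtr_ge0 ?divr_ge0.
have [ac|ca] := leP a c; first by rewrite (le_trans _ RHS_ge0) // subr_le0.
set K := [set k | a <= d k]; set L := [set k | d k <= c].
have KL : [disjoint K & L].
  by rewrite -setI_eq0; apply/eqP/setP => k; rewrite !inE; apply/negbTE; lra.
have cardK : (i.+1 <= #|K|)%N.
  by rewrite (card_set_perm _ s_perm) sorted_count_ge_nth ?size_s.
have cardL : (j.+1 <= #|L|)%N.
  rewrite (card_set_perm (fun y => y <= c) s_perm); apply: leq_trans (sorted_count_le_nth _ _ _);
    rewrite ?size_s //; lia.
have Ka : {in K, forall k, a <= d k} by move=> k; rewrite inE.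
have Lc : {in L, forall k, d k <= - - c} by move=> k; rewrite inE opprK.
have := frob_block_bound x_ge0 KL Ka Lc; rewrite -frobA => block.
rewrite -addnA addn1 natrD natrM; apply: le_half_sqrt_of_weighted_sqr => //.
  by rewrite ltr0n.
apply: le_trans block; rewrite ler_pM2l // lerD // ler_wpM2r ?sqr_ge0 // ler_nat //.
  by rewrite -ltnS prednK // (leq_trans _ cardK).
Qed.

Lemma spread_n_le (R : realType) (i j n : nat) : (1 <= i < n)%N -> (j < n)%N ->
  spread_n R i j n <= n%:R / 2 * Num.sqrt ((i + j + 1)%:R / (i * (j + 1))%:R).
Proof.
move=> i_bd j_lt; apply: (big_ind (fun y => y <= _)) => [||e /andP[e_sym _]].
- by apply: lambda_gap_le => //; apply/eqP/matrixP => k l; rewrite !mxE.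
- by move=> y z y_le z_le; rewrite ge_max y_le z_le.
- exact: lambda_gap_le.
Qed.

Lemma spread_limit_le (R : realType) (i j : nat) (s : R) : (1 <= i)%N ->
  ((fun n : nat => spread_n R i j n / n%:R) @ \oo --> s)%classic ->
  s <= 2^-1 * Num.sqrt ((i + j + 1)%:R / (i * (j + 1))%:R).
Proof.
move=> i_ge1 cvg_s; apply: (cvgr_to_le cvg_s); exists (i + j).+1 => // n /= n_gt.
have n_gt0 : (0 : R) < n%:R by rewrite ltr0n; lia.
by rewrite ler_pdivrMr // [_ * n%:R]mulrC mulrA spread_n_le //; lia.
Qed.

Theorem theorem1p1 (R : realType) :
  (forall (n i j : nat) (e : 'M[bool]_n),
     (2 <= n)%N -> (1 <= i <= n.-1)%N -> (j <= n.-1)%N -> loop_graph e ->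
     lambda (adj R e) i.+1 - lambda (adj R e) (n - j)
       <= (n%:R / 2) * Num.sqrt ((i + j + 1)%:R / (i * (j + 1))%:R))
  /\
  (forall (i j : nat) (s : R), (1 <= i)%N ->
     ((fun n : nat => spread_n R i j n / n%:R) @ \oo --> s)%classic ->
     s <= 2^-1 * Num.sqrt ((i + j + 1)%:R / (i * (j + 1))%:R)).
Proof.
split; last exact: spread_limit_le.
by move=> n i j e n_ge2 i_bd j_le; apply: lambda_gap_le => //; lia.
Qed.
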